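(* Every finitely generated group with infinitely many ends is not presentable by a product.
   Context: An infinite group $\Gamma$ is not presentable by a product if for every homomorphism $\varphi\colon \Gamma_1\times\Gamma_2\to\Gamma$ whose image has finite index in $\Gamma$, at least one of $\varphi(\Gamma_1)$, $\varphi(\Gamma_2)$ is finite. The ends of a finitely generated group are the ends of a Cayley graph with respect to a finite generating set. *)

From Stdlib Require Import List Relations.
Import ListNotations.
Set Implicit Arguments.

Record is_group (T : Type) (mul : T -> T -> T) (one : T) (inv : T -> T) : Prop := {
  grp_assoc : forall x y z, mul x (mul y z) = mul (mul x y) z;
  grp_idl : forall x, mul one x = x;
  grp_idr : forall x, mul x one = x;
  grp_invl : forall x, mul (inv x) x = one;
  grp_invr : forall x, mul x (inv x) = one
}.

Definition finite_set (T : Type) (P : T -> Prop) : Prop :=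
  exists l : list T, forall x, P x -> In x l.

Definition is_hom (A B : Type) (mulA : A -> A -> A) (mulB : B -> B -> B)
  (f : A -> B) : Prop := forall x y, f (mulA x y) = mulB (f x) (f y).

Definition image_set (A B : Type) (f : A -> B) : B -> Prop :=
  fun b => exists a, f a = b.

Definition finite_index (T : Type) (mul : T -> T -> T) (H : T -> Prop) : Prop :=
  exists l : list T, forall g, exists c h, In c l /\ H h /\ g = mul c h.

Definition prod_mul (A B : Type) (mulA : A -> A -> A) (mulB : B -> B -> B)
  (x y : A * B) : A * B := (mulA (fst x) (fst y), mulB (snd x) (snd y)).

Definition not_presentable_by_product (T : Type) (mul : T -> T -> T) (one : T)
  (inv : T -> T) : Prop :=
  ~ finite_set (fun _ : T => True) /\
  forall (G1 : Type) (mul1 : G1 -> G1 -> G1) (one1 : G1) (inv1 : G1 -> G1)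
         (G2 : Type) (mul2 : G2 -> G2 -> G2) (one2 : G2) (inv2 : G2 -> G2)
         (phi : G1 * G2 -> T),
    is_group mul1 one1 inv1 -> is_group mul2 one2 inv2 ->
    is_hom (prod_mul mul1 mul2) mul phi ->
    finite_index mul (image_set phi) ->
    finite_set (image_set (fun a : G1 => phi (a, one2))) \/
    finite_set (image_set (fun b : G2 => phi (one1, b))).

Inductive generated (T : Type) (mul : T -> T -> T) (one : T) (inv : T -> T)
  (S : list T) : T -> Prop :=
| gen_one : generated mul one inv S one
| gen_mul : forall g s, generated mul one inv S g -> In s S ->
    generated mul one inv S (mul g s)
| gen_mulinv : forall g s, generated mul one inv S g -> In s S ->
    generated mul one inv S (mul g (inv s)).

Definition generating_list (T : Type) (mul : T -> T -> T) (one : T)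
  (inv : T -> T) (S : list T) : Prop :=
  forall g, generated mul one inv S g.

Definition cayley_edge (T : Type) (mul : T -> T -> T) (inv : T -> T)
  (S : list T) (x y : T) : Prop :=
  exists s, In s S /\ (y = mul x s \/ y = mul x (inv s)).

Definition conn_avoiding (V : Type) (E : V -> V -> Prop) (K : list V) : V -> V -> Prop :=
  clos_refl_trans V (fun x y => E x y /\ ~ In x K /\ ~ In y K).

Definition infinitely_many_ends (V : Type) (E : V -> V -> Prop) : Prop :=
  forall n : nat, exists (K : list V) (l : list V),
    length l = n /\
    (forall x, In x l -> ~ In x K /\ ~ finite_set (conn_avoiding E K x)) /\
    NoDup l /\
    (forall x y, In x l -> In y l -> conn_avoiding E K x y -> x = y).

From Stdlib Require Import List Relations Lia Classical PeanoNat Wf_nat.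
Import ListNotations.
Set Implicit Arguments.

(* The images A and B of the two factors commute elementwise, and finitely many right
   translates of AB cover the group. Right multiplication by a fixed element keeps all but
   finitely many vertices in their component of the complement of a finite set K, and for
   commuting a, b outside a ball around K one of a, b is joined to ab = ba. Hence every infinite
   component contains infinitely many elements of A or of B. Now let K be connected through the
   identity with three infinite complementary components, and take b in B with bK disjoint
   from K. Two components each containing infinitely many elements of A would be joined through
   bK (translate a path avoiding bK by b^-1) unless one of them contains b; so b lies in all
   but at most one of them, which leaves no room for a third infinite component. *)

Lemma finite_set_sub (T : Type) (P Q : T -> Prop) :
  finite_set Q -> (forall x, P x -> Q x) -> finite_set P.
Proof. intros [l Hl] H. exists l. auto. Qed.

Lemma finite_set_or (T : Type) (P Q : T -> Prop) :
  finite_set P -> finite_set Q -> finite_set (fun x => P x \/ Q x).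
Proof.
  intros [l1 H1] [l2 H2]. exists (l1 ++ l2).
  intros x [Hx|Hx]; apply in_or_app; auto.
Qed.

Lemma finite_set_In (T : Type) (l : list T) : finite_set (fun x => In x l).
Proof. exists l. auto. Qed.

Lemma finite_set_image (A B : Type) (P : A -> Prop) (f : A -> B) :
  finite_set P -> finite_set (fun z => exists x, P x /\ z = f x).
Proof. intros [l Hl]. exists (map f l). intros z [x [Px ->]]. apply in_map. auto. Qed.

Lemma finite_set_Union (A B : Type) (P : A -> Prop) (Q : A -> B -> Prop) :
  finite_set P -> (forall u, P u -> finite_set (Q u)) ->
  finite_set (fun z => exists u, P u /\ Q u z).
Proof.
  intros [l Hl] HQ.
  enough (H : finite_set (fun z => exists u, In u l /\ P u /\ Q u z)).
  { apply finite_set_sub with (1 := H). intros z [u [Pu Qz]]. eauto. }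
  clear Hl. induction l as [|u l IH].
  - exists []. intros z [u [[] _]].
  - apply finite_set_sub with (fun z => (P u /\ Q u z) \/ exists v, In v l /\ P v /\ Q v z).
    + apply finite_set_or; [|exact IH].
      destruct (classic (P u)) as [Pu|NPu].
      * apply finite_set_sub with (Q u); [apply HQ, Pu|]. intros z []; auto.
      * exists []. intros z []; contradiction.
    + intros z [v [[<-|Hv] HPQ]]; [left|right; exists v]; auto.
Qed.

Lemma infinite_set_not_In (T : Type) (P : T -> Prop) (l : list T) :
  ~ finite_set P -> exists x, P x /\ ~ In x l.
Proof.
  intros H. apply NNPP. intros H'. apply H. exists l. intros x Px.
  apply NNPP. intros Hn. apply H'. eauto.
Qed.

Section Graph.
Variables (V : Type) (E : V -> V -> Prop).
Local Notation conn := (conn_avoiding E).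

Lemma conn_trans K x y z : conn K x y -> conn K y z -> conn K x z.
Proof. apply rt_trans. Qed.

Lemma conn_edge K x y : E x y -> ~ In x K -> ~ In y K -> conn K x y.
Proof. intros. apply rt_step. auto. Qed.

Lemma conn_mono K1 K2 x y : incl K2 K1 -> conn K1 x y -> conn K2 x y.
Proof.
  intros HK. induction 1 as [x y [Hxy [Hx Hy]]| |]; [| apply rt_refl | eapply rt_trans; eauto].
  apply conn_edge; auto.
Qed.

Lemma conn_notin K x y : conn K x y -> ~ In x K -> ~ In y K.
Proof. intros H. apply clos_rt_rtn1 in H. induction H as [|y z [_ [_ Hz]] _ IH]; auto. Qed.

Lemma conn_restrict K Y a z :
  (forall w, conn K a w -> ~ In w Y) -> conn K a z -> conn Y a z.
Proof.
  intros HY H. apply clos_rt_rtn1 in H.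
  induction H as [|y z [Hyz [Hy Hz]] Hay IH]; [apply rt_refl|].
  apply clos_rt_rtn1_iff in Hay.
  apply conn_trans with y; [exact IH|apply conn_edge]; auto.
  apply HY, conn_trans with y; [|apply conn_edge]; auto.
Qed.

Lemma ends_infinite_vertices : infinitely_many_ends E -> ~ finite_set (fun _ : V => True).
Proof.
  intros Hends [L HL]. destruct (Hends 1) as [K [[|x l] [Hlen [Hl _]]]]; [discriminate|].
  apply (proj2 (Hl x (or_introl eq_refl))). exists L. auto.
Qed.

Definition infinite_component (K : list V) (y : V) : Prop :=
  ~ In y K /\ ~ finite_set (conn K y).

(* Stands in for "[K] is connected and contains [o]": no finite set disjoint from [K]
   separates a vertex of [K] from [o]. *)
Definition linked_to (o : V) (K : list V) : Prop :=
  forall Y, (forall w, In w K -> ~ In w Y) -> forall z, In z K -> conn Y o z.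

Lemma linked_to_app o K1 K2 : linked_to o K1 -> linked_to o K2 -> linked_to o (K1 ++ K2).
Proof.
  intros H1 H2 Y HY z Hz.
  apply in_app_or in Hz as [Hz|Hz]; [apply H1|apply H2]; auto;
    intros w Hw; apply HY, in_or_app; auto.
Qed.

Lemma linked_hull o : (forall x, exists l, In x l /\ linked_to o l) ->
  forall K, exists K', incl K K' /\ In o K' /\ linked_to o K'.
Proof.
  intros Hx K. induction K as [|k K [K' [HK [Ho HK']]]].
  - exists [o]. split; [intros z []|split; [left; auto|]].
    intros Y _ z [<-|[]]. apply rt_refl.
  - destruct (Hx k) as [l [Hk Hl]]. exists (l ++ K'). split; [|split].
    + intros z [<-|Hz]; apply in_or_app; auto.
    + apply in_or_app; auto.
    + apply linked_to_app; auto.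
Qed.

Section Symmetric.
Hypothesis E_sym : forall x y, E x y -> E y x.

Lemma conn_sym K x y : conn K x y -> conn K y x.
Proof.
  induction 1 as [x y [Hxy [Hx Hy]]| |]; [| apply rt_refl | eapply rt_trans; eauto].
  apply conn_edge; auto.
Qed.

Lemma not_conn_sym K x y : ~ conn K x y -> ~ conn K y x.
Proof. intros H Hyx. apply H, conn_sym, Hyx. Qed.

Hypothesis E_connected : forall x y, conn [] x y.

Lemma conn_to_linked o K Y a : In o K -> linked_to o K -> (forall w, In w K -> ~ In w Y) ->
  ~ In a K -> (forall z, conn K a z -> ~ In z Y) -> conn Y a o.
Proof.
  intros Ho HK HY Ha HaY.
  (* Follow a path from [a] to [o] until it first enters [K]. *)
  assert (Hpath : forall u v,
            clos_refl_trans_1n V (fun x y => E x y /\ ~ In x [] /\ ~ In y []) u v ->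
            v = o -> conn K a u -> conn Y u o).
  { induction 1 as [u|u u1 v [Hu _] _ IH]; intros -> Hau.
    - exfalso. apply (conn_notin Hau); auto.
    - assert (HuK : ~ In u K) by (apply (conn_notin Hau); auto).
      destruct (classic (In u1 K)) as [Hu1|Hu1].
      + apply conn_trans with u1; [apply conn_edge; auto|].
        apply conn_sym, HK; auto.
      + assert (Hau1 : conn K a u1) by (apply conn_trans with u; [|apply conn_edge]; auto).
        apply conn_trans with u1; [apply conn_edge|apply IH]; auto. }
  apply (Hpath a o); [apply clos_rt_rt1n, E_connected|reflexivity|apply rt_refl].
Qed.

End Symmetric.

Variable nbrs : V -> list V.
Hypothesis nbrs_spec : forall x y, E x y -> In y (nbrs x).

Lemma infinite_component_shrink K K' x : incl K K' -> infinite_component K x ->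
  exists y, conn K x y /\ infinite_component K' y.
Proof.
  intros HKK' [Hx Hinf]. apply NNPP. intros Hno. apply Hinf.
  (* The [K]-component of [x] is covered by [K'] and the [K']-components of the points of [W]. *)
  set (W := x :: flat_map nbrs K').
  assert (Hcover : forall z, conn K x z -> In z K' \/
            exists w, (In w W /\ conn K x w /\ ~ In w K') /\ conn K' w z).
  { intros z Hz. apply clos_rt_rtn1 in Hz.
    induction Hz as [|y z [Hyz [Hy Hz]] Hxy IH].
    - destruct (classic (In x K')); [left; auto|right].
      exists x. repeat split; [left; auto|apply rt_refl|auto|apply rt_refl].
    - apply clos_rt_rtn1_iff in Hxy.
      assert (Hxz : conn K x z) by (apply conn_trans with y; [|apply conn_edge]; auto).
      destruct (classic (In z K')) as [HzK'|HzK']; [left; auto|right].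
      destruct IH as [HyK'|[w [Hw Hwy]]].
      + exists z. repeat split; auto; [|apply rt_refl].
        right. apply in_flat_map. eauto.
      + exists w. split; auto. apply conn_trans with y; auto.
        apply conn_edge; auto. apply (conn_notin Hwy). apply Hw. }
  apply finite_set_sub with (fun z => In z K' \/
            exists w, (In w W /\ conn K x w /\ ~ In w K') /\ conn K' w z); [|exact Hcover].
  apply finite_set_or; [apply finite_set_In|].
  apply finite_set_Union.
  - apply finite_set_sub with (fun w => In w W); [apply finite_set_In|]. intros w []; auto.
  - intros w [_ [Hxw HwK']]. apply NNPP. intros Hw. apply Hno. exists w. split; auto. split; auto.
Qed.

End Graph.

Section Group.
Variables (T : Type) (mul : T -> T -> T) (one : T) (inv : T -> T).
Hypothesis Hg : is_group mul one inv.
Local Infix "**" := mul (at level 40, left associativity).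

Lemma mulgA x y z : x ** (y ** z) = x ** y ** z. Proof. apply (grp_assoc Hg). Qed.
Lemma mul1g x : one ** x = x. Proof. apply (grp_idl Hg). Qed.
Lemma mulg1 x : x ** one = x. Proof. apply (grp_idr Hg). Qed.
Lemma mulVg x : inv x ** x = one. Proof. apply (grp_invl Hg). Qed.
Lemma mulgV x : x ** inv x = one. Proof. apply (grp_invr Hg). Qed.

Lemma mulKg x y : inv x ** (x ** y) = y.
Proof. rewrite mulgA, mulVg, mul1g. reflexivity. Qed.
Lemma mulKVg x y : x ** (inv x ** y) = y.
Proof. rewrite mulgA, mulgV, mul1g. reflexivity. Qed.
Lemma mulgK x y : y ** x ** inv x = y.
Proof. rewrite <- mulgA, mulgV, mulg1. reflexivity. Qed.

Lemma mulgI x y z : x ** y = x ** z -> y = z.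
Proof. intros H. rewrite <- (mulKg x y), H, mulKg. reflexivity. Qed.

Lemma inv_uniq x y : x ** y = one -> y = inv x.
Proof. intros H. apply (@mulgI x). rewrite H, mulgV. reflexivity. Qed.

Lemma invgK x : inv (inv x) = x.
Proof. symmetry. apply inv_uniq, mulVg. Qed.

Lemma invMg x y : inv (x ** y) = inv y ** inv x.
Proof. symmetry. apply inv_uniq. rewrite <- mulgA, mulKVg, mulgV. reflexivity. Qed.

Lemma invg1 : inv one = one.
Proof. symmetry. apply inv_uniq, mul1g. Qed.

Lemma in_map_mul g (K : list T) x : In (g ** x) (map (mul g) K) <-> In x K.
Proof.
  split; [|apply in_map].
  intros [y [Hy Hin]]%in_map_iff. apply mulgI in Hy. subst. exact Hin.
Qed.

Variable gens : list T.
Hypothesis HS : generating_list mul one inv gens.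

Definition letter (t : T) : Prop := exists s, In s gens /\ (t = s \/ t = inv s).

Lemma letter_inv t : letter t -> letter (inv t).
Proof. intros [s [Hs [->| ->]]]; exists s; split; auto. rewrite invgK. auto. Qed.

Lemma letter_In t : letter t -> In t (gens ++ map inv gens).
Proof. intros [s [Hs [->| ->]]]; apply in_or_app; [left|right; apply in_map]; auto. Qed.

Inductive word : nat -> T -> Prop :=
| word0 : word 0 one
| wordS n g t : word n g -> letter t -> word (S n) (g ** t).

Lemma word_mul m y : word m y -> forall n x, word n x -> word (n + m) (x ** y).
Proof.
  induction 1 as [|m y t Hy IH Ht]; intros n x Hx.
  - rewrite mulg1, Nat.add_0_r. exact Hx.
  - rewrite Nat.add_succ_r, mulgA. constructor; auto.
Qed.

Lemma word_letter t : letter t -> word 1 t.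
Proof. intros Ht. rewrite <- (mul1g t). constructor; [constructor|exact Ht]. Qed.

Lemma word_inv n x : word n x -> word n (inv x).
Proof.
  induction 1 as [|n g t Hg' IH Ht]; [rewrite invg1; constructor|].
  rewrite invMg. apply (word_mul IH (word_letter (letter_inv Ht))).
Qed.

Lemma word_exists x : exists n, word n x.
Proof.
  induction (HS x) as [|g s _ [n IH] Hs|g s _ [n IH] Hs];
    [exists 0; constructor|exists (S n)..]; constructor; auto; exists s; auto.
Qed.

Definition shortest (n : nat) (x : T) : Prop := word n x /\ forall m, word m x -> n <= m.

Lemma shortest_exists x : exists n, shortest n x.
Proof.
  destruct (dec_inh_nat_subset_has_unique_least_element (fun n => word n x))
    as [n [Hn _]]; [intros n; apply classic|apply word_exists|].
  exists n. exact Hn.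
Qed.

Definition ball (r : nat) (x : T) : Prop := exists m, m <= r /\ word m x.

Lemma finite_ball r : finite_set (ball r).
Proof.
  induction r as [|r IH].
  - exists [one]. intros x [m [Hm Hx]]. assert (m = 0) as -> by lia.
    inversion Hx. left. reflexivity.
  - apply finite_set_sub with
      (fun x => ball r x \/ exists g, ball r g /\ exists t, letter t /\ x = g ** t).
    + apply finite_set_or; [exact IH|]. apply finite_set_Union; [exact IH|].
      intros g _. apply finite_set_image.
      apply finite_set_sub with (fun t => In t (gens ++ map inv gens));
        [apply finite_set_In|apply letter_In].
    + intros x [m [Hm Hx]]. destruct (Nat.eq_dec m (S r)) as [->|Hne].
      * inversion Hx as [|r' g t Hg' Ht]; subst. right. exists g.
        split; [exists r; auto|eauto].
      * left. exists m. split; [lia|exact Hx].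
Qed.

Lemma list_in_ball (K : list T) : exists r, forall k, In k K -> ball r k.
Proof.
  induction K as [|k K [r IH]]; [exists 0; intros k []|].
  destruct (word_exists k) as [n Hn]. exists (n + r). intros z [<-|Hz].
  - exists n. split; [lia|exact Hn].
  - destruct (IH z Hz) as [m [Hm Hr]]. exists m. split; [lia|exact Hr].
Qed.

Local Notation E := (cayley_edge mul inv gens).
Local Notation conn := (conn_avoiding E).

Lemma cayley_letter x t : letter t -> E x (x ** t).
Proof. intros [s [Hs [->| ->]]]; exists s; auto. Qed.

Lemma cayley_edge_letter x y : E x y -> exists t, letter t /\ y = x ** t.
Proof. intros [s [Hs [->| ->]]]; eexists; split; try reflexivity; exists s; auto. Qed.

Lemma cayley_sym x y : E x y -> E y x.
Proof.
  intros [t [Ht ->]]%cayley_edge_letter.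
  assert (H := cayley_letter (x ** t) (letter_inv Ht)). rewrite mulgK in H. exact H.
Qed.

Definition cayley_nbrs (x : T) : list T := map (mul x) (gens ++ map inv gens).

Lemma cayley_nbrs_spec x y : E x y -> In y (cayley_nbrs x).
Proof. intros [t [Ht ->]]%cayley_edge_letter. apply in_map, letter_In, Ht. Qed.

Lemma conn_translate g K x y : conn K x y -> conn (map (mul g) K) (g ** x) (g ** y).
Proof.
  induction 1 as [x y [Hxy [Hx Hy]]| |]; [| apply rt_refl | eapply rt_trans; eauto].
  apply conn_edge; try rewrite in_map_mul; auto.
  destruct (cayley_edge_letter Hxy) as [t [Ht ->]]. rewrite mulgA. apply cayley_letter, Ht.
Qed.

Lemma conn_untranslate g K x y : conn (map (mul g) K) (g ** x) (g ** y) -> conn K x y.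
Proof.
  intros H. apply (conn_translate (inv g)) in H. rewrite !mulKg in H.
  apply conn_mono with (2 := H). intros z Hz. rewrite <- (mulKg g z).
  apply in_map_mul, in_map_mul, Hz.
Qed.

Lemma linked_translate g l K x : linked_to E one l -> In x l ->
  (forall y, In y l -> ~ In (g ** y) K) -> conn K g (g ** x).
Proof.
  intros Hl Hx HK. rewrite <- (mulg1 g) at 1.
  apply (@conn_untranslate (inv g)). rewrite !mulKg.
  apply Hl; auto. intros w Hw [k [<- Hk]]%in_map_iff.
  apply (HK _ Hw). rewrite mulKVg. exact Hk.
Qed.

Lemma word_path n b : word n b -> exists l, In b l /\ linked_to E one l /\
  forall x, In x l -> exists k, k <= n /\ word k x /\ word (n - k) (inv x ** b).
Proof.
  induction 1 as [|n g t Hgw [l [Hgl [Hl Hsplit]]] Ht].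
  - exists [one]. split; [left; auto|split].
    + intros Y _ z [<-|[]]. apply rt_refl.
    + intros x [<-|[]]. exists 0. rewrite mulVg. repeat split; constructor.
  - exists (g ** t :: l). split; [left; auto|split].
    + intros Y HY.
      assert (HlY : forall w, In w l -> ~ In w Y) by (intros w Hw; apply HY; right; exact Hw).
      intros z [<-|Hz]; [|apply Hl; auto].
      apply conn_trans with g; [apply Hl; auto|].
      apply conn_edge; [apply cayley_letter, Ht|apply HlY, Hgl|apply HY; left; auto].
    + intros x [<-|Hx].
      * exists (S n). rewrite mulVg, Nat.sub_diag. repeat split; constructor; auto.
      * destruct (Hsplit x Hx) as [k [Hk [Hxk Hxb]]]. exists k. split; [lia|split; auto].
        replace (S n - k) with (S (n - k)) by lia. rewrite mulgA. constructor; auto.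
Qed.

Lemma linked_exists x : exists l, In x l /\ linked_to E one l.
Proof.
  destruct (word_exists x) as [n Hn]. destruct (word_path Hn) as [l [Hx [Hl _]]]. eauto.
Qed.

Lemma cayley_connected x y : conn [] x y.
Proof.
  destruct (linked_exists (inv x ** y)) as [l [Hin Hl]].
  rewrite <- (mulKVg x y). apply (linked_translate _ _ _ Hl Hin). intros w _ [].
Qed.

Lemma finite_not_conn_mulr K u : finite_set (fun v => ~ conn K v (v ** u)).
Proof.
  destruct (linked_exists u) as [l [Hu Hl]].
  apply finite_set_sub with (fun v => exists k, In k K /\ exists x, In x l /\ v = k ** inv x).
  - apply finite_set_Union; [apply finite_set_In|]. intros k _.
    apply finite_set_image with (f := fun x => k ** inv x), finite_set_In.
  - intros v Hv. apply NNPP. intros Hno. apply Hv, (linked_translate _ _ _ Hl Hu).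
    intros x Hx Hin. apply Hno. exists (v ** x). split; auto.
    exists x. split; auto. rewrite mulgK. reflexivity.
Qed.

Lemma finite_mulr_in_component K y c (Q : T -> Prop) :
  finite_set (fun h => Q h /\ conn K y h) -> finite_set (fun h => Q h /\ conn K y (h ** c)).
Proof.
  intros HQ. apply finite_set_sub with (fun h => (Q h /\ conn K y h) \/ ~ conn K h (h ** c)).
  - apply finite_set_or; [exact HQ|apply finite_not_conn_mulr].
  - intros h [Qh Hyh]. destruct (classic (conn K h (h ** c))) as [Hh|Hh]; [left|right]; auto.
    split; auto. apply conn_trans with (h ** c); auto. apply (conn_sym cayley_sym), Hh.
Qed.

Lemma translate_hit_bound r a b x na nb k : shortest na a -> k <= nb -> word k x ->
  word (nb - k) (inv x ** b) -> ball r (a ** x) ->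
  exists m, word m (a ** b) /\ m + na <= r + r + nb.
Proof.
  intros [_ Hmin] Hk Hx Hxb [m [Hm Hax]].
  assert (Hna : na <= m + k).
  { apply Hmin. rewrite <- (mulgK x a). exact (word_mul (word_inv Hx) Hax). }
  exists (m + (nb - k)). split; [|lia].
  rewrite <- (mulKVg x b), mulgA. exact (word_mul Hxb Hax).
Qed.

Lemma commuting_near K r a b : a ** b = b ** a -> (forall k, In k K -> ball r k) ->
  conn K a (a ** b) \/ conn K b (b ** a) \/ ball (r + r) (a ** b).
Proof.
  intros Hab HK.
  destruct (shortest_exists a) as [na Ha]. destruct (shortest_exists b) as [nb Hb].
  destruct (word_path (proj1 Ha)) as [la [Hal [Hla Hsa]]].
  destruct (word_path (proj1 Hb)) as [lb [Hbl [Hlb Hsb]]].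
  destruct (classic (exists x, In x lb /\ In (a ** x) K)) as [[x [Hx HxK]]|Hno];
    [|left; apply (linked_translate _ _ _ Hlb Hbl); intros x Hx Hin; apply Hno; eauto].
  destruct (classic (exists y, In y la /\ In (b ** y) K)) as [[y [Hy HyK]]|Hno];
    [|right; left; apply (linked_translate _ _ _ Hla Hal); intros y Hy Hin; apply Hno; eauto].
  (* Both translated geodesics meet [K]; adding the two bounds gives [|ab| + |ba| <= 4r]. *)
  right; right.
  destruct (Hsb x Hx) as [k [Hk [Hxk Hxb]]]. destruct (Hsa y Hy) as [j [Hj [Hyj Hya]]].
  destruct (translate_hit_bound Ha Hk Hxk Hxb (HK _ HxK)) as [m1 [Hm1 Hb1]].
  destruct (translate_hit_bound Hb Hj Hyj Hya (HK _ HyK)) as [m2 [Hm2 Hb2]].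
  rewrite <- Hab in Hm2.
  destruct (Nat.le_gt_cases m1 (r + r)); [exists m1|exists m2]; split; auto; lia.
Qed.

Section CommutingCover.
Variables (A B : T -> Prop) (L : list T).
Hypothesis A_B_comm : forall a b, A a -> B b -> a ** b = b ** a.
Hypothesis cover : forall x, exists a b c, A a /\ B b /\ In c L /\ x = a ** b ** c.

Lemma infinite_component_factor K y : infinite_component E K y ->
  ~ finite_set (fun a => A a /\ conn K y a) \/ ~ finite_set (fun b => B b /\ conn K y b).
Proof.
  intros [_ Hinf]. apply NNPP. intros [HA HB]%not_or_and. apply NNPP in HA, HB.
  destruct (list_in_ball K) as [r Hr].
  set (AB := fun h => exists a b, A a /\ B b /\ h = a ** b).
  assert (HAB : finite_set (fun h => AB h /\ conn K y h)).
  { apply finite_set_sub with (fun h => ball (r + r) h \/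
      (exists a, (A a /\ conn K y a) /\ exists b, (B b /\ conn K y (b ** a)) /\ h = a ** b) \/
      (exists b, (B b /\ conn K y b) /\ exists a, (A a /\ conn K y (a ** b)) /\ h = a ** b)).
    - apply finite_set_or; [apply finite_ball|apply finite_set_or];
        apply finite_set_Union; auto; intros u _.
      + apply finite_set_image with (f := mul u), finite_mulr_in_component, HB.
      + apply finite_set_image with (f := fun a => a ** u), finite_mulr_in_component, HA.
    - intros h [[a [b [Ha [Hb ->]]]] Hyh]. assert (Hc := A_B_comm Ha Hb).
      destruct (commuting_near _ Hc Hr) as [Hn|[Hn|Hn]]; [right; left|right; right|left; auto].
      + exists a. split; [split; auto|exists b; rewrite <- Hc; auto].
        apply conn_trans with (a ** b); auto. apply (conn_sym cayley_sym), Hn.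
      + exists b. split; [split; auto|exists a; auto].
        apply conn_trans with (a ** b); auto. rewrite Hc. apply (conn_sym cayley_sym), Hn. }
  apply Hinf. apply finite_set_sub with
    (fun x => exists c, In c L /\ exists h, (AB h /\ conn K y (h ** c)) /\ x = h ** c).
  - apply finite_set_Union; [apply finite_set_In|]. intros c _.
    apply finite_set_image with (f := fun h => h ** c), finite_mulr_in_component, HAB.
  - intros x Hx. destruct (cover x) as [a [b [c [Ha [Hb [Hc ->]]]]]].
    exists c. split; auto. exists (a ** b). repeat split; auto. exists a, b. auto.
Qed.

End CommutingCover.

Section Separation.
Variable K : list T.
Hypotheses (one_K : In one K) (linked_K : linked_to E one K).

Definition far (g : T) : Prop := forall k, In k K -> ~ In (g ** k) K.

Lemma exists_far (P : T -> Prop) : ~ finite_set P -> exists g, P g /\ far g.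
Proof.
  intros HP.
  destruct (infinite_set_not_In (flat_map (fun k => map (fun k' => k' ** inv k) K) K) HP)
    as [g [Pg Ng]].
  exists g. split; auto. intros k Hk Hin. apply Ng, in_flat_map. exists k. split; auto.
  apply in_map_iff. exists (g ** k). split; auto. apply mulgK.
Qed.

Lemma conn_far_translate g k : far g -> In k K -> conn K g (g ** k).
Proof. intros Hfar Hk. apply (linked_translate _ _ _ linked_K Hk). exact Hfar. Qed.

Lemma conn_of_far_shift g a1 a2 : far g -> ~ In a1 K -> ~ In a2 K ->
  (forall z, conn K a1 z -> ~ In z (map (mul g) K)) ->
  (forall z, conn K a2 z -> ~ In z (map (mul g) K)) ->
  conn K a1 (g ** a1) -> conn K a2 (g ** a2) -> conn K a1 a2.
Proof.
  intros Hfar Ha1 Ha2 H1 H2 Hs1 Hs2.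
  assert (Hdisj : forall w, In w K -> ~ In w (map (mul g) K)).
  { intros w Hw [k [<- Hk]]%in_map_iff. exact (Hfar k Hk Hw). }
  apply (@conn_untranslate g).
  apply conn_trans with a1; [apply (conn_sym cayley_sym), (conn_restrict _ H1 Hs1)|].
  apply conn_trans with one;
    [apply (conn_to_linked cayley_sym cayley_connected (K := K)); auto|].
  apply conn_trans with a2; [|apply (conn_restrict _ H2 Hs2)].
  apply (conn_sym cayley_sym), (conn_to_linked cayley_sym cayley_connected (K := K)); auto.
Qed.

Variables (A B : T -> Prop).
Hypothesis A_B_comm : forall a b, A a -> B b -> a ** b = b ** a.

Lemma far_factor_in_components b y1 y2 : B b -> far b ->
  ~ conn K y1 y2 ->
  ~ finite_set (fun a => A a /\ conn K y1 a) -> ~ finite_set (fun a => A a /\ conn K y2 a) ->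
  conn K y1 b \/ conn K y2 b.
Proof.
  intros Hb Hfar Hy12 I1 I2.
  assert (Hpick : forall y, ~ finite_set (fun a => A a /\ conn K y a) ->
            exists a, conn K y a /\ ~ In a K /\ conn K a (b ** a)).
  { intros y Iy. destruct (finite_not_conn_mulr K b) as [lx Hlx].
    destruct (infinite_set_not_In (K ++ lx) Iy) as [a [[Ha Hya] Hal]].
    exists a. split; [|split]; auto using in_or_app.
    rewrite <- (A_B_comm Ha Hb). apply NNPP. intros Hn. apply Hal, in_or_app. auto. }
  assert (Hhit : forall y a, conn K y a ->
            (exists z, conn K a z /\ In z (map (mul b) K)) -> conn K y b).
  { intros y a Hya [z [Haz [k [<- Hk]]%in_map_iff]].
    apply conn_trans with a; auto. apply conn_trans with (b ** k); auto.
    apply (conn_sym cayley_sym), conn_far_translate; auto. }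
  destruct (Hpick y1 I1) as [a1 [Hya1 [Ha1 Hs1]]].
  destruct (Hpick y2 I2) as [a2 [Hya2 [Ha2 Hs2]]].
  destruct (classic (exists z, conn K a1 z /\ In z (map (mul b) K))) as [H1|H1]; [eauto|].
  destruct (classic (exists z, conn K a2 z /\ In z (map (mul b) K))) as [H2|H2]; [eauto|].
  exfalso. apply Hy12. apply conn_trans with a1; auto.
  apply conn_trans with a2; [|apply (conn_sym cayley_sym), Hya2].
  apply (conn_of_far_shift Hfar); auto; intros z Hz Hin; eauto.
Qed.

Lemma no_three_components y1 y2 y3 :
  ~ conn K y1 y2 -> ~ conn K y1 y3 -> ~ conn K y2 y3 ->
  ~ finite_set (fun a => A a /\ conn K y1 a) -> ~ finite_set (fun a => A a /\ conn K y2 a) ->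
  ~ finite_set (fun a => A a /\ conn K y3 a) \/ ~ finite_set (fun b => B b /\ conn K y3 b) ->
  ~ finite_set B -> False.
Proof.
  intros N12 N13 N23 I1 I2 I3 IB.
  assert (Hjoin : forall u v b, conn K u b -> conn K v b -> conn K u v).
  { intros u v b Hu Hv. apply conn_trans with b; auto. apply (conn_sym cayley_sym), Hv. }
  destruct I3 as [I3|I3].
  - destruct (exists_far IB) as [b [Hb Hfar]].
    destruct (far_factor_in_components Hb Hfar N12 I1 I2) as [H1|H1];
    destruct (far_factor_in_components Hb Hfar N13 I1 I3) as [H2|H2];
    destruct (far_factor_in_components Hb Hfar N23 I2 I3) as [H3|H3];
    eauto using not_conn_sym, cayley_sym.
  - destruct (exists_far I3) as [b [[Hb H3] Hfar]].
    destruct (far_factor_in_components Hb Hfar N12 I1 I2) as [H|H]; eauto.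
Qed.

End Separation.

Lemma three_infinite_components : infinitely_many_ends E ->
  exists K y1 y2 y3, In one K /\ linked_to E one K /\
    infinite_component E K y1 /\ infinite_component E K y2 /\ infinite_component E K y3 /\
    ~ conn K y1 y2 /\ ~ conn K y1 y3 /\ ~ conn K y2 y3.
Proof.
  intros Hends.
  destruct (Hends 3) as [K0 [[|x1 [|x2 [|x3 [|x4 l]]]] [Hlen [Hl [Hnd Hsep]]]]];
    try discriminate.
  destruct (linked_hull linked_exists K0) as [K [HK [Hone Hlinked]]].
  assert (Hshrink : forall x, In x [x1; x2; x3] ->
            exists y, conn K0 x y /\ infinite_component E K y).
  { intros x Hx. apply (infinite_component_shrink _ cayley_nbrs_spec HK), Hl, Hx. }
  assert (Hapart : forall xi xj yi yj, In xi [x1; x2; x3] -> In xj [x1; x2; x3] -> xi <> xj ->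
            conn K0 xi yi -> conn K0 xj yj -> ~ conn K yi yj).
  { intros xi xj yi yj Hi Hj Hij Hxi Hxj Hy. apply Hij, Hsep; auto.
    apply conn_trans with yi; auto.
    apply conn_trans with yj; [apply (conn_mono HK Hy)|apply (conn_sym cayley_sym), Hxj]. }
  apply NoDup_cons_iff in Hnd as [N1 Hnd]. apply NoDup_cons_iff in Hnd as [N2 _].
  destruct (Hshrink x1) as [y1 [C1 I1]]; [simpl; auto|].
  destruct (Hshrink x2) as [y2 [C2 I2]]; [simpl; auto|].
  destruct (Hshrink x3) as [y3 [C3 I3]]; [simpl; auto|].
  exists K, y1, y2, y3. do 5 (split; [assumption|]). split; [|split].
  - apply (Hapart x1 x2); simpl; auto. intros ->. apply N1. left. reflexivity.
  - apply (Hapart x1 x3); simpl; auto. intros ->. apply N1. right. left. reflexivity.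
  - apply (Hapart x2 x3); simpl; auto. intros ->. apply N2. left. reflexivity.
Qed.

Lemma no_infinite_commuting_cover (A B : T -> Prop) (L : list T) :
  infinitely_many_ends E ->
  (forall a b, A a -> B b -> a ** b = b ** a) ->
  (forall x, exists a b c, A a /\ B b /\ In c L /\ x = a ** b ** c) ->
  ~ finite_set A -> ~ finite_set B -> False.
Proof.
  intros Hends Hcomm Hcover IA IB.
  assert (Hcomm' : forall b a, B b -> A a -> b ** a = a ** b) by (intros; symmetry; auto).
  destruct (three_infinite_components Hends)
    as [K [y1 [y2 [y3 [Hone [Hlinked [C1 [C2 [C3 [N12 [N13 N23]]]]]]]]]]].
  pose proof (not_conn_sym cayley_sym N12) as N21.
  pose proof (not_conn_sym cayley_sym N13) as N31.
  pose proof (not_conn_sym cayley_sym N23) as N32.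
  pose proof (infinite_component_factor A B L Hcomm Hcover) as Hfactor.
  pose proof (no_three_components Hone Hlinked A Hcomm) as HAB.
  pose proof (no_three_components Hone Hlinked B Hcomm') as HBA.
  (* Two of the three components contain infinitely many elements of the same factor. *)
  destruct (Hfactor _ _ C1) as [A1|B1]; destruct (Hfactor _ _ C2) as [A2|B2];
    [|destruct (Hfactor _ _ C3) as [A3|B3]|destruct (Hfactor _ _ C3) as [A3|B3]|].
  - exact (HAB _ _ _ N12 N13 N23 A1 A2 (Hfactor _ _ C3) IB).
  - exact (HAB _ _ _ N13 N12 N32 A1 A3 (or_intror B2) IB).
  - exact (HBA _ _ _ N23 N21 N31 B2 B3 (or_intror A1) IA).
  - exact (HAB _ _ _ N23 N21 N31 A2 A3 (or_intror B1) IB).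
  - exact (HBA _ _ _ N13 N12 N32 B1 B3 (or_intror A2) IA).
  - apply (HBA _ _ _ N12 N13 N23 B1 B2); [apply or_comm, Hfactor, C3|exact IA].
Qed.

Section ProductHom.
Variables (G1 : Type) (mul1 : G1 -> G1 -> G1) (one1 : G1) (inv1 : G1 -> G1).
Variables (G2 : Type) (mul2 : G2 -> G2 -> G2) (one2 : G2) (inv2 : G2 -> G2).
Hypotheses (Hg1 : is_group mul1 one1 inv1) (Hg2 : is_group mul2 one2 inv2).
Variable phi : G1 * G2 -> T.
Hypothesis Hphi : is_hom (prod_mul mul1 mul2) mul phi.

Lemma hom_one : phi (one1, one2) = one.
Proof.
  apply (@mulgI (phi (one1, one2))). rewrite mulg1, <- Hphi. unfold prod_mul; simpl.
  rewrite (grp_idl Hg1), (grp_idl Hg2). reflexivity.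
Qed.

Lemma hom_inv x1 x2 : phi (inv1 x1, inv2 x2) = inv (phi (x1, x2)).
Proof.
  apply inv_uniq. rewrite <- Hphi. unfold prod_mul; simpl.
  rewrite (grp_invr Hg1), (grp_invr Hg2). apply hom_one.
Qed.

Lemma hom_split x1 x2 : phi (x1, x2) = phi (x1, one2) ** phi (one1, x2).
Proof.
  rewrite <- Hphi. unfold prod_mul; simpl. rewrite (grp_idr Hg1), (grp_idl Hg2). reflexivity.
Qed.

Lemma hom_factors_commute a b : image_set (fun x1 => phi (x1, one2)) a ->
  image_set (fun x2 => phi (one1, x2)) b -> a ** b = b ** a.
Proof.
  intros [x1 <-] [x2 <-]. rewrite <- !Hphi. unfold prod_mul; simpl.
  rewrite (grp_idl Hg1), (grp_idr Hg1), (grp_idl Hg2), (grp_idr Hg2). reflexivity.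
Qed.

Lemma finite_index_factor_cover : finite_index mul (image_set phi) ->
  exists L, forall x, exists a b c, image_set (fun x1 => phi (x1, one2)) a /\
    image_set (fun x2 => phi (one1, x2)) b /\ In c L /\ x = a ** b ** c.
Proof.
  intros [L HL]. exists (map inv L). intros x.
  destruct (HL (inv x)) as [c [h [Hc [[[x1 x2] <-] Hx]]]].
  exists (phi (inv1 x1, one2)), (phi (one1, inv2 x2)), (inv c).
  split; [eexists; reflexivity|split; [eexists; reflexivity|split; [apply in_map, Hc|]]].
  rewrite <- hom_split, hom_inv, <- invMg, <- Hx, invgK. reflexivity.
Qed.

End ProductHom.

End Group.

Theorem proposition9p1 (T : Type) (mul : T -> T -> T) (one : T) (inv : T -> T)
  (S : list T) :
  is_group mul one inv ->
  generating_list mul one inv S ->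
  infinitely_many_ends (cayley_edge mul inv S) ->
  not_presentable_by_product mul one inv.
Proof.
  intros Hg HS Hends. split; [exact (ends_infinite_vertices Hends)|].
  intros G1 mul1 one1 inv1 G2 mul2 one2 inv2 phi Hg1 Hg2 Hphi Hfi.
  apply NNPP. intros [IA IB]%not_or_and.
  destruct (finite_index_factor_cover Hg Hg1 Hg2 Hphi Hfi) as [L HL].
  exact (no_infinite_commuting_cover Hg HS L Hends (hom_factors_commute Hg1 Hg2 Hphi) HL IA IB).
Qed.
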